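(* Let $\Sigma$ be a finite alphabet. The function $d_2:\Sigma^*\times\Sigma^*\to\mathbb{Z}_{\ge0}$, $d_2(u,v)=H(\underline{u},\underline{v})+\lceil |l(u)-l(v)|/2\rceil$, is an integer-valued metric on $\Sigma^*$, and it is Hamming compatible.
   Context: $\Sigma_n$ is the set of words of length $n$ over $\Sigma$, $\Sigma^*$ the set of all finite words, $l(u)$ the length of $u$. $H$ is the Hamming distance between equal-length words. Truncated Hamming function: if $l(u)\ge l(v)$, $\underline{u}$ is the prefix of $u$ of length $l(v)$ and $\underline{v}=v$ (symmetrically otherwise), and $H(\underline{u},\underline{v})$ is the Hamming distance between these equal-length words. A metric $\delta$ on $\Sigma^*$ is Hamming compatible if $\delta(u,v)=H(u,v)$ whenever $l(u)=l(v)$. *)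

From mathcomp Require Import all_boot.
Set Implicit Arguments. Unset Strict Implicit. Unset Printing Implicit Defensive.

(* Words over alphabet S are sequences [seq S]; l(u) = size u. *)

(* Hamming distance: number of positions where u and v differ
   (meaningful for equal-length words; it compares the first
   min(size u, size v) letters). *)
Definition hamming (S : eqType) (u v : seq S) : nat :=
  count (fun p => p.1 != p.2) (zip u v).

Definition trunc_hamming (S : eqType) (u v : seq S) : nat :=
  let m := minn (size u) (size v) in hamming (take m u) (take m v).

Definition absdiff (a b : nat) : nat := maxn a b - minn a b.

Definition ceil_half (n : nat) : nat := n.+1./2.

Definition d2 (S : eqType) (u v : seq S) : nat :=
  trunc_hamming u v + ceil_half (absdiff (size u) (size v)).

Definition is_metric (S : eqType) (d : seq S -> seq S -> nat) : Prop :=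
  (forall u v, d u v = 0 <-> u = v) /\
  (forall u v, d u v = d v u) /\
  (forall u v w, d u w <= d u v + d v w).

Definition hamming_compatible (S : eqType) (d : seq S -> seq S -> nat) : Prop :=
  forall u v, size u = size v -> d u v = hamming u v.

From mathcomp Require Import all_boot.
From mathcomp Require Import zify.

(* Since [zip] already truncates to the common length, the truncated Hamming
   function coincides with [hamming]; hence d2 peels off matching first letters:
   d2 (x :: u) (y :: v) = [x != y] + d2 u v, while against the empty word it
   is ceil(l(u)/2).  Identity of indiscernibles, symmetry and Hamming
   compatibility are then immediate.  The triangle inequality
   d2 u w <= d2 u v + d2 v w is proved by induction on u, with v and w
   arbitrary:
   - if u or w is empty, it reduces to subadditivity of ceil(_/2) along
     absolute differences of lengths;
   - if v is empty, it is the bound d2 u w <= ceil(l(u)/2) + ceil(l(w)/2);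
   - if all three are non-empty, peel off the first letters and combine the
     induction hypothesis with the triangle inequality for single letters. *)

Lemma ceil_half_eq0 (n : nat) : (ceil_half n == 0) = (n == 0).
Proof. by case: n. Qed.

Lemma absdiffC (a b : nat) : absdiff a b = absdiff b a.
Proof. by rewrite /absdiff maxnC minnC. Qed.

Lemma absdiffnn (a : nat) : absdiff a a = 0.
Proof. by rewrite /absdiff maxnn minnn subnn. Qed.

Lemma absdiffSS (a b : nat) : absdiff a.+1 b.+1 = absdiff a b.
Proof. by rewrite /absdiff maxnSS minnSS subSS. Qed.

Lemma absdiff_eq0 (a b : nat) : (absdiff a b == 0) = (a == b).
Proof. rewrite /absdiff; apply/eqP/eqP; lia. Qed.

(* ceil(m/2) <= ceil(n/2) + ceil(|n - m|/2): the triangle inequality through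
   the empty word. *)
Lemma ceil_half_absdiff (m n : nat) :
  ceil_half m <= ceil_half n + ceil_half (absdiff n m).
Proof. rewrite /ceil_half /absdiff -!divn2; lia. Qed.

Lemma minn_ceil_half_absdiff (a b : nat) :
  minn a b + ceil_half (absdiff a b) <= ceil_half a + ceil_half b.
Proof. rewrite /ceil_half /absdiff -!divn2; lia. Qed.

Lemma neq_triangle {S : eqType} (x y z : S) : (x != z) <= (x != y) + (y != z).
Proof. by case: (x =P y) => [->|]; case: (y != z); case: (x != z). Qed.

Section WordMetric.
Variable S : eqType.
Implicit Types (x y : S) (u v w : seq S).

Lemma hamming_cons x y u v : hamming (x :: u) (y :: v) = (x != y) + hamming u v.
Proof. by []. Qed.

Lemma hamming_nil_l v : hamming [::] v = 0.
Proof. by case: v. Qed.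

Lemma hamming_nil_r u : hamming u [::] = 0.
Proof. by case: u. Qed.

(* [zip] truncates by itself, so truncating first changes nothing. *)
Lemma trunc_hammingE u v : trunc_hamming u v = hamming u v.
Proof.
rewrite /trunc_hamming.
elim: u v => [|x u IH] [|y v] //=; rewrite ?take0 ?hamming_nil_l ?hamming_nil_r //.
by rewrite minnSS /= hamming_cons IH.
Qed.

Lemma hammingC u v : hamming u v = hamming v u.
Proof.
elim: u v => [|x u IH] [|y v]; rewrite ?hamming_nil_l ?hamming_nil_r //.
by rewrite !hamming_cons IH eq_sym.
Qed.

Lemma hamming_le_minn u v : hamming u v <= minn (size u) (size v).
Proof. by rewrite /hamming -size_zip count_size. Qed.

Lemma hamming_eq0 u v : size u = size v -> (hamming u v == 0) = (u == v).
Proof.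
elim: u v => [|x u IH] [|y v] //= [/IH Huv].
by rewrite hamming_cons addn_eq0 eqb0 negbK Huv eqseq_cons.
Qed.

Lemma d2_cons x y u v : d2 (x :: u) (y :: v) = (x != y) + d2 u v.
Proof. by rewrite /d2 !trunc_hammingE hamming_cons absdiffSS addnA. Qed.

Lemma d2_nil_l v : d2 [::] v = ceil_half (size v).
Proof. by rewrite /d2 trunc_hammingE hamming_nil_l /absdiff max0n min0n subn0. Qed.

Lemma d2_nil_r u : d2 u [::] = ceil_half (size u).
Proof. by rewrite /d2 trunc_hammingE hamming_nil_r /absdiff maxn0 minn0 subn0. Qed.

Lemma d2_ge_length u v : ceil_half (absdiff (size u) (size v)) <= d2 u v.
Proof. exact: leq_addl. Qed.

Lemma d2C u v : d2 u v = d2 v u.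
Proof. by rewrite /d2 !trunc_hammingE hammingC absdiffC. Qed.

(* Zero distance forces equal lengths, and then zero Hamming distance. *)
Lemma d2_eq0 u v : (d2 u v == 0) = (u == v).
Proof.
rewrite /d2 trunc_hammingE addn_eq0 ceil_half_eq0 absdiff_eq0.
have [Hsz|Hsz] := eqVneq (size u) (size v).
  by rewrite andbT (@hamming_eq0 u v Hsz).
by rewrite andbF; apply/esym/eqP => Huv; rewrite Huv eqxx in Hsz.
Qed.

(* The triangle inequality through the empty word. *)
Lemma d2_le_nil u w : d2 u w <= ceil_half (size u) + ceil_half (size w).
Proof.
rewrite /d2 trunc_hammingE.
exact: leq_trans (leq_add (hamming_le_minn u w) (leqnn _))
                 (minn_ceil_half_absdiff _ _).
Qed.

Lemma d2_triangle u v w : d2 u w <= d2 u v + d2 v w.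
Proof.
elim: u v w => [|x u IH] v w.
  rewrite !d2_nil_l; apply: leq_trans (ceil_half_absdiff _ (size v)) _.
  by rewrite leq_add2l d2_ge_length.
case: w => [|z w].
  rewrite !d2_nil_r addnC; apply: leq_trans (ceil_half_absdiff _ (size v)) _.
  by rewrite leq_add2l d2C d2_ge_length.
case: v => [|y v]; first by rewrite d2_nil_l d2_nil_r d2_le_nil.
rewrite !d2_cons addnACA.
exact: leq_add (neq_triangle x y z) (IH v w).
Qed.

Lemma d2_hamming u v : size u = size v -> d2 u v = hamming u v.
Proof. by move=> Hsz; rewrite /d2 trunc_hammingE Hsz absdiffnn addn0. Qed.

End WordMetric.

Theorem proposition2p4 (Sigma : finType) :
  is_metric (@d2 Sigma) /\ hamming_compatible (@d2 Sigma).
Proof.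
split; last exact: d2_hamming.
split.
  move=> u v; split=> [/eqP|->]; first by rewrite d2_eq0 => /eqP.
  by apply/eqP; rewrite d2_eq0.
split; [exact: d2C | exact: d2_triangle].
Qed.
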